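(* Let $\gamma\ge0$ be an integer and let $\xi=\{\xi^m\}_{m\ge0}$ be given by $\xi^m=K_\gamma\mathbf{1}(m=\gamma)$ with $K_\gamma=\pm2\omega_\gamma\sqrt{\frac{2}{3C_{\gamma\gamma\gamma\gamma}}}$. Then $\mathcal{M}(\xi)=0$.
   Context: $\omega_n=n+1$, $C_{ijkm}=\frac2\pi\int_{-1}^1U_iU_jU_kU_m\sqrt{1-y^2}\,dy$ ($U_n$ Chebyshev polynomials of the second kind). $(A\xi)^m=\omega_m^2\xi^m$; $(f(u))^m=-\sum_{i,j,k\ge0}C_{ijkm}u^iu^ju^k$; $\Phi^t(\xi)=\{\xi^n\cos(\omega_nt)\}_n$; $\langle f\rangle(\xi)=\frac1{2\pi}\int_0^{2\pi}\Phi^t[f(\Phi^t(\xi))]dt$; and $\mathcal{M}(\xi)=A\xi+\langle f\rangle(\xi)$. *)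

From Stdlib Require Import Reals.
From Coquelicot Require Import Coquelicot.
Open Scope R_scope.

Fixpoint chebU (n : nat) (y : R) : R :=
  match n with
  | O => 1
  | S p => match p with
           | O => 2 * y
           | S q => 2 * y * chebU p y - chebU q y
           end
  end.

Definition omega (n : nat) : R := INR n + 1.

Definition Ccoef (i j k m : nat) : R :=
  2 / PI * RInt (fun y => chebU i y * chebU j y * chebU k y * chebU m y
                          * sqrt (1 - y ^ 2)) (-1) 1.

Definition Aop (xi : nat -> R) (m : nat) : R := omega m ^ 2 * xi m.

Definition fnl (u : nat -> R) (m : nat) : R :=
  - Series (fun i => Series (fun j => Series (fun k =>
        Ccoef i j k m * u i * u j * u k))).

Definition Phi (t : R) (xi : nat -> R) (n : nat) : R := xi n * cos (omega n * t).

Definition favg (xi : nat -> R) (m : nat) : R :=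
  1 / (2 * PI) * RInt (fun t => Phi t (fnl (Phi t xi)) m) 0 (2 * PI).

Definition Mop (xi : nat -> R) (m : nat) : R := Aop xi m + favg xi m.

From Stdlib Require Import Reals Lra Lia ZArith.
From Coquelicot Require Import Coquelicot.
Open Scope R_scope.

(* Phi^t maps the single mode xi = K e_gamma to K cos(omega_gamma t) e_gamma, on which
   the cubic nonlinearity only sees the coefficients C_{gamma gamma gamma m}.  Averaging
   cos^3(omega_gamma t) cos(omega_m t) over a period keeps only the resonances
   omega_m = omega_gamma (weight 3/8) and omega_m = 3 omega_gamma, i.e. m = 3 gamma + 2
   (weight 1/8).  The second coefficient vanishes: U_{3 gamma + 2} is orthogonal, for the
   semicircle weight, to the polynomial U_gamma^3 of degree 3 gamma.  Hence M(xi)^m = 0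
   for m <> gamma, while M(xi)^gamma = K (omega_gamma^2 - 3/8 C_{gamma gamma gamma gamma} K^2),
   which vanishes by the choice of K. *)

Lemma sum_n_single_support (f : nat -> R) (g N : nat) :
  (forall n, n <> g -> f n = 0) -> sum_n f N = if Nat.leb g N then f g else 0.
Proof.
  intros Hf; induction N as [|N IH].
  - rewrite sum_O; destruct g as [|g]; [reflexivity|apply Hf; lia].
  - rewrite sum_Sn, IH; unfold plus; simpl.
    destruct (Nat.leb_spec g N), (Nat.leb_spec g (S N)); try lia.
    + rewrite (Hf (S N)) by lia; ring.
    + replace g with (S N) by lia; ring.
    + rewrite (Hf (S N)) by lia; ring.
Qed.

Lemma Series_single_support (f : nat -> R) (g : nat) :
  (forall n, n <> g -> f n = 0) -> Series f = f g.
Proof.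
  intros Hf; apply is_series_unique.
  change (is_lim_seq (sum_n f) (f g)).
  apply is_lim_seq_ext_loc with (fun _ => f g); [|apply is_lim_seq_const].
  exists g; intros N HN.
  rewrite (sum_n_single_support f g N Hf).
  now destruct (Nat.leb_spec g N); [|lia].
Qed.

Lemma Series_zero (f : nat -> R) : (forall n, f n = 0) -> Series f = 0.
Proof. intros Hf; rewrite (Series_single_support f 0); auto. Qed.

Lemma fnl_single_support (u : nat -> R) (g m : nat) :
  (forall n, n <> g -> u n = 0) -> fnl u m = - (Ccoef g g g m * u g ^ 3).
Proof.
  intros Hu; unfold fnl; f_equal.
  rewrite (Series_single_support _ g).
  - rewrite (Series_single_support _ g).
    + rewrite (Series_single_support _ g); [ring|].
      intros k Hk; rewrite (Hu k Hk); ring.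
    + intros j Hj; apply Series_zero; intros k; rewrite (Hu j Hj); ring.
  - intros i Hi; apply Series_zero; intros j; apply Series_zero; intros k.
    rewrite (Hu i Hi); ring.
Qed.

Inductive poly_le : nat -> (R -> R) -> Prop :=
  | poly_le_const c : poly_le 0 (fun _ => c)
  | poly_le_S d f : poly_le d f -> poly_le (S d) f
  | poly_le_mulX d f : poly_le d f -> poly_le (S d) (fun y => y * f y)
  | poly_le_add d f g : poly_le d f -> poly_le d g -> poly_le d (fun y => f y + g y)
  | poly_le_scal d c f : poly_le d f -> poly_le d (fun y => c * f y)
  | poly_le_ext d f g : poly_le d f -> (forall y, f y = g y) -> poly_le d g.

Lemma poly_le_mul d e f g :
  poly_le d f -> poly_le e g -> poly_le (d + e) (fun y => f y * g y).
Proof.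
  intros Hf Hg.
  induction Hf as [c|d f _ IH|d f _ IH|d f1 f2 _ IH1 _ IH2|d c f _ IH|d f1 f2 _ IH Hext].
  - now apply poly_le_scal.
  - now apply poly_le_S.
  - eapply poly_le_ext; [apply poly_le_mulX, IH|]; intros y; simpl; ring.
  - eapply poly_le_ext; [apply (poly_le_add _ _ _ IH1 IH2)|]; intros y; simpl; ring.
  - eapply poly_le_ext; [apply (poly_le_scal _ c _ IH)|]; intros y; simpl; ring.
  - eapply poly_le_ext; [apply IH|]; intros y; simpl; now rewrite Hext.
Qed.

Lemma poly_le_continuous d f : poly_le d f -> forall x, continuous f x.
Proof.
  induction 1 as [c|d f _ IH|d f _ IH|d f g _ IHf _ IHg|d c f _ IH|d f g _ IH Hext];
    intros x.
  - apply continuous_const.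
  - apply IH.
  - apply (continuous_mult (fun y => y) f); [apply continuous_id|apply IH].
  - apply (continuous_plus f g); auto.
  - apply (continuous_mult (fun _ => c) f); [apply continuous_const|apply IH].
  - eapply continuous_ext; eauto.
Qed.

Lemma chebU_SS n y : chebU (S (S n)) y = 2 * y * chebU (S n) y - chebU n y.
Proof. reflexivity. Qed.

Lemma chebU_poly_le n : poly_le n (chebU n).
Proof.
  enough (H : poly_le n (chebU n) /\ poly_le (S n) (chebU (S n))) by apply H.
  induction n as [|n [IH1 IH2]]; split; auto.
  - apply (poly_le_const 1).
  - eapply poly_le_ext; [apply poly_le_mulX, (poly_le_const 2)|]; intros y; simpl; ring.
  - eapply poly_le_ext.
    + apply poly_le_add; [apply poly_le_mulX, (poly_le_scal _ 2), IH2|].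
      apply (poly_le_scal _ (-1)), poly_le_S, poly_le_S, IH1.
    + intros y; rewrite chebU_SS; ring.
Qed.

Lemma chebU_cos_mul_sin n t : chebU n (cos t) * sin t = sin (INR (S n) * t).
Proof.
  enough (H : chebU n (cos t) * sin t = sin (INR (S n) * t)
              /\ chebU (S n) (cos t) * sin t = sin (INR (S (S n)) * t)) by apply H.
  induction n as [|n [IH1 IH2]]; split; auto.
  - simpl; rewrite Rmult_1_l, Rmult_1_l; reflexivity.
  - simpl; replace ((1 + 1) * t) with (t + t) by ring; rewrite sin_plus; ring.
  - rewrite chebU_SS.
    replace (INR (S (S (S n))) * t) with (INR (S (S n)) * t + t) by (rewrite !S_INR; ring).
    replace (INR (S n) * t) with (INR (S (S n)) * t - t) in IH1 by (rewrite !S_INR; ring).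
    rewrite sin_plus; rewrite sin_minus in IH1.
    transitivity (2 * cos t * (chebU (S n) (cos t) * sin t) - chebU n (cos t) * sin t);
      [ring|].
    rewrite IH1, IH2; ring.
Qed.

Lemma is_RInt_cos_Zmul (z : Z) (n : nat) :
  z <> 0%Z -> is_RInt (fun t => cos (IZR z * t)) 0 (INR n * PI) 0.
Proof.
  intros Hz; assert (Hz' : IZR z <> 0) by now apply not_0_IZR.
  assert (Hv : sin (IZR z * (INR n * PI)) / IZR z - sin (IZR z * 0) / IZR z = 0).
  { rewrite Rmult_0_r, sin_0, sin_eq_0_1; [field; exact Hz'|].
    exists (z * Z.of_nat n)%Z; rewrite mult_IZR, <- INR_IZR_INZ; ring. }
  rewrite <- Hv at 2.
  apply (is_RInt_derive (fun t => sin (IZR z * t) / IZR z)).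
  - intros x _; auto_derive; [easy|field; exact Hz'].
  - intros x _.
    apply (ex_derive_continuous (K := R_AbsRing) (V := R_NormedModule)); auto_derive; easy.
Qed.

Lemma is_RInt_cos_Zmul_2PI (z : Z) :
  is_RInt (fun t => cos (IZR z * t)) 0 (2 * PI) (if Z.eqb z 0 then 2 * PI else 0).
Proof.
  destruct (Z.eqb_spec z 0) as [->|Hz].
  - apply (is_RInt_ext (fun _ => 1)).
    + intros t _; rewrite Rmult_0_l, cos_0; reflexivity.
    + replace (2 * PI) with (scal (2 * PI - 0) 1) at 2 by (compute; ring).
      apply (is_RInt_const (V := R_NormedModule)).
  - replace (2 * PI) with (INR 2 * PI) by (simpl; ring).
    now apply is_RInt_cos_Zmul.
Qed.

Definition chebW (y : R) : R := sqrt (1 - y ^ 2).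

Lemma chebW_continuous x : continuous chebW x.
Proof.
  apply continuous_sqrt_comp.
  apply (ex_derive_continuous (K := R_AbsRing) (V := R_NormedModule) (fun y => 1 - y ^ 2)).
  auto_derive; easy.
Qed.

Lemma chebU_chebW_cos m t : 0 <= t <= PI ->
  - sin t * (chebU m (cos t) * chebW (cos t))
  = / 2 * (cos (IZR (Z.of_nat m + 2) * t) + -1 * cos (IZR (Z.of_nat m) * t)).
Proof.
  intros Ht; unfold chebW.
  replace (1 - cos t ^ 2) with (sin t ^ 2) by (rewrite <- (sin2_cos2 t); unfold Rsqr; ring).
  rewrite sqrt_pow2 by (apply sin_ge_0; lra).
  transitivity (- (chebU m (cos t) * sin t) * sin t); [ring|].
  rewrite chebU_cos_mul_sin.
  replace (IZR (Z.of_nat m + 2) * t) with (INR (S m) * t + t)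
    by (rewrite plus_IZR, <- INR_IZR_INZ, S_INR; ring).
  replace (IZR (Z.of_nat m) * t) with (INR (S m) * t - t)
    by (rewrite <- INR_IZR_INZ, S_INR; ring).
  rewrite cos_plus, cos_minus; field.
Qed.

Lemma is_RInt_chebU_chebW m : (0 < m)%nat -> is_RInt (fun y => chebU m y * chebW y) (-1) 1 0.
Proof.
  intros Hm; set (w := fun y => chebU m y * chebW y).
  assert (Hw : forall x, continuous w x).
  { intros x; apply (continuous_mult (chebU m) chebW);
      [apply (poly_le_continuous _ _ (chebU_poly_le m))|apply chebW_continuous]. }
  assert (Hsubst : is_RInt (fun t => scal (- sin t) (w (cos t))) 0 PI (RInt w 1 (-1))).
  { rewrite <- cos_0, <- cos_PI.
    apply (is_RInt_comp (V := R_CompleteNormedModule)); [intros; apply Hw|].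
    intros x _; split; [auto_derive; [easy|ring]|].
    apply (ex_derive_continuous (K := R_AbsRing) (V := R_NormedModule) (fun x => - sin x)).
    auto_derive; easy. }
  assert (Hzero : is_RInt (fun t => scal (- sin t) (w (cos t))) 0 PI 0).
  { apply (is_RInt_ext (fun t => / 2 * (cos (IZR (Z.of_nat m + 2) * t)
                                      + -1 * cos (IZR (Z.of_nat m) * t)))).
    - intros t Ht; rewrite Rmin_left, Rmax_right in Ht by (pose proof PI_RGT_0; lra).
      symmetry; apply chebU_chebW_cos; lra.
    - assert (H : is_RInt (fun t => / 2 * (cos (IZR (Z.of_nat m + 2) * t)
                                            + -1 * cos (IZR (Z.of_nat m) * t)))
                    0 (INR 1 * PI) (/ 2 * (0 + -1 * 0))).
      { apply (is_RInt_scal (V := R_NormedModule)), (is_RInt_plus (V := R_NormedModule));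
          [|apply (is_RInt_scal (V := R_NormedModule))]; apply is_RInt_cos_Zmul; lia. }
      now replace (INR 1 * PI) with PI in H by (simpl; ring);
        replace (/ 2 * (0 + -1 * 0)) with 0 in H by ring. }
  assert (Hex : ex_RInt w (-1) 1)
    by (apply (ex_RInt_continuous (V := R_CompleteNormedModule)); intros; apply Hw).
  assert (Hswap := opp_RInt_swap (V := R_CompleteNormedModule) w (-1) 1 Hex).
  assert (Hval : RInt w 1 (-1) = 0).
  { apply (is_RInt_unique (V := R_CompleteNormedModule)) in Hsubst, Hzero.
    now rewrite <- Hsubst. }
  rewrite <- Hswap in Hval.
  replace 0 with (RInt w (-1) 1) by (change (- RInt w (-1) 1 = 0) in Hval; lra).
  now apply (RInt_correct (V := R_CompleteNormedModule)).
Qed.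

Lemma is_RInt_poly_chebU_chebW d f m : poly_le d f -> (d < m)%nat ->
  is_RInt (fun y => f y * chebU m y * chebW y) (-1) 1 0.
Proof.
  intros Hf; revert m.
  induction Hf as [c|d f _ IH|d f _ IH|d f g _ IHf _ IHg|d c f _ IH|d f g _ IH Hext];
    intros m Hm.
  - apply (is_RInt_ext (fun y => c * (chebU m y * chebW y))); [intros; simpl; ring|].
    rewrite <- (Rmult_0_r c).
    now apply (is_RInt_scal (V := R_NormedModule)), is_RInt_chebU_chebW.
  - apply IH; lia.
  - (* y U_(p+1) = (U_(p+2) + U_p) / 2 *)
    destruct m as [|p]; [lia|].
    apply (is_RInt_ext (fun y => / 2 * (f y * chebU (S (S p)) y * chebW y
                                        + f y * chebU p y * chebW y))).
    { intros y _; cbn -[chebU]; rewrite chebU_SS; field. }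
    rewrite <- (Rmult_0_r (/ 2)), <- (Rplus_0_r 0).
    apply (is_RInt_scal (V := R_NormedModule)), (is_RInt_plus (V := R_NormedModule));
      apply IH; lia.
  - apply (is_RInt_ext (fun y => f y * chebU m y * chebW y + g y * chebU m y * chebW y));
      [intros; simpl; ring|].
    rewrite <- (Rplus_0_r 0).
    apply (is_RInt_plus (V := R_NormedModule)); auto.
  - apply (is_RInt_ext (fun y => c * (f y * chebU m y * chebW y))); [intros; simpl; ring|].
    rewrite <- (Rmult_0_r c).
    apply (is_RInt_scal (V := R_NormedModule)); auto.
  - apply (is_RInt_ext (fun y => f y * chebU m y * chebW y)); [intros; simpl; now rewrite Hext|].
    auto.
Qed.

Lemma Ccoef_high_index i j k m : (i + j + k < m)%nat -> Ccoef i j k m = 0.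
Proof.
  intros Hm; unfold Ccoef.
  assert (Hp : poly_le (i + j + k) (fun y => chebU i y * chebU j y * chebU k y))
    by (apply poly_le_mul; [apply poly_le_mul|]; apply chebU_poly_le).
  replace (RInt _ (-1) 1) with 0; [ring|].
  symmetry; exact (is_RInt_unique _ _ _ _ (is_RInt_poly_chebU_chebW _ _ _ Hp Hm)).
Qed.

Lemma cos_cube_mul x y :
  cos x ^ 3 * cos y
  = 3 / 8 * (cos (x - y) + cos (x + y)) + 1 / 8 * (cos (3 * x - y) + cos (3 * x + y)).
Proof.
  assert (H3 : cos (3 * x) = 4 * cos x ^ 3 - 3 * cos x).
  { replace (3 * x) with (x + x + x) by ring.
    rewrite !cos_plus, !sin_plus.
    transitivity (cos x * cos x * cos x - 3 * (sin x * sin x) * cos x); [ring|].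
    replace (sin x * sin x) with (1 - cos x * cos x)
      by (rewrite <- (sin2_cos2 x); unfold Rsqr; ring).
    ring. }
  rewrite !cos_minus, !cos_plus, H3; field.
Qed.

Lemma is_RInt_cos_cube_mul (p q : nat) : (0 < q)%nat ->
  is_RInt (fun t => cos (INR p * t) ^ 3 * cos (INR q * t)) 0 (2 * PI)
    ((if Nat.eqb p q then 3 / 4 * PI else 0) + (if Nat.eqb q (3 * p) then PI / 4 else 0)).
Proof.
  intros Hq; set (zp := Z.of_nat p); set (zq := Z.of_nat q).
  set (J z := if Z.eqb z 0 then 2 * PI else 0).
  set (v := 3 / 8 * (J (zp - zq)%Z + J (zp + zq)%Z)
            + 1 / 8 * (J (3 * zp - zq)%Z + J (3 * zp + zq)%Z)).
  assert (H : is_RInt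
    (fun t => 3 / 8 * (cos (IZR (zp - zq) * t) + cos (IZR (zp + zq) * t))
              + 1 / 8 * (cos (IZR (3 * zp - zq) * t) + cos (IZR (3 * zp + zq) * t)))
    0 (2 * PI) v).
  { apply (is_RInt_plus (V := R_NormedModule)); apply (is_RInt_scal (V := R_NormedModule));
      apply (is_RInt_plus (V := R_NormedModule)); apply is_RInt_cos_Zmul_2PI. }
  assert (Hval : v = (if Nat.eqb p q then 3 / 4 * PI else 0)
                     + (if Nat.eqb q (3 * p) then PI / 4 else 0)).
  { unfold v, J, zp, zq.
    destruct (Nat.eqb_spec p q), (Nat.eqb_spec q (3 * p)),
      (Z.eqb_spec (Z.of_nat p - Z.of_nat q) 0), (Z.eqb_spec (Z.of_nat p + Z.of_nat q) 0),
      (Z.eqb_spec (3 * Z.of_nat p - Z.of_nat q) 0), (Z.eqb_spec (3 * Z.of_nat p + Z.of_nat q) 0);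
      try lia; field. }
  rewrite Hval in H; revert H.
  apply is_RInt_ext; intros t _.
  rewrite cos_cube_mul; unfold zp, zq.
  rewrite !minus_IZR, !plus_IZR, !mult_IZR, <- !INR_IZR_INZ.
  f_equal; f_equal; f_equal; f_equal; ring.
Qed.

Lemma omega_INR n : omega n = INR (S n).
Proof. now rewrite S_INR. Qed.

Definition single_mode (g : nat) (K : R) (n : nat) : R := if Nat.eqb n g then K else 0.

Lemma favg_single_mode g K m :
  favg (single_mode g K) m = if Nat.eqb m g then - (3 / 8 * Ccoef g g g g * K ^ 3) else 0.
Proof.
  set (C := Ccoef g g g m).
  assert (Hint : forall t, Phi t (fnl (Phi t (single_mode g K))) m
    = - (C * K ^ 3) * (cos (INR (S g) * t) ^ 3 * cos (INR (S m) * t))).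
  { intros t; unfold Phi at 1.
    rewrite (fnl_single_support _ g).
    - unfold Phi, single_mode; rewrite Nat.eqb_refl, !omega_INR; unfold C; ring.
    - intros n Hn; unfold Phi, single_mode.
      rewrite (proj2 (Nat.eqb_neq n g) Hn); ring. }
  assert (HR : RInt (fun t => Phi t (fnl (Phi t (single_mode g K))) m) 0 (2 * PI)
    = - (C * K ^ 3) * ((if Nat.eqb (S g) (S m) then 3 / 4 * PI else 0)
                       + (if Nat.eqb (S m) (3 * S g) then PI / 4 else 0))).
  { apply is_RInt_unique, (is_RInt_ext (fun t => - (C * K ^ 3)
                             * (cos (INR (S g) * t) ^ 3 * cos (INR (S m) * t)))).
    - intros t _; now rewrite Hint.
    - apply (is_RInt_scal (V := R_NormedModule)), is_RInt_cos_cube_mul; lia. }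
  unfold favg; rewrite HR; pose proof PI_RGT_0.
  destruct (Nat.eqb_spec m g) as [-> | Hmg].
  - rewrite Nat.eqb_refl; replace (Nat.eqb (S g) (3 * S g)) with false
      by (symmetry; apply Nat.eqb_neq; lia).
    unfold C; field; lra.
  - replace (Nat.eqb (S g) (S m)) with false by (symmetry; apply Nat.eqb_neq; lia).
    destruct (Nat.eqb_spec (S m) (3 * S g)).
    + unfold C; rewrite Ccoef_high_index by lia; field; lra.
    + field; lra.
Qed.

Lemma amplitude_cases g K :
  K = 2 * omega g * sqrt (2 / (3 * Ccoef g g g g))
  \/ K = - (2 * omega g * sqrt (2 / (3 * Ccoef g g g g))) ->
  K = 0 \/ Ccoef g g g g * K ^ 2 = 8 / 3 * omega g ^ 2.
Proof.
  set (C := Ccoef g g g g); intros HK.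
  destruct (Rle_dec C 0) as [HC|HC].
  - (* sqrt vanishes on nonpositive arguments, and 2 / 0 = 0 *)
    left; assert (Hneg : 2 / (3 * C) <= 0).
    { destruct (Req_dec C 0) as [-> | HC0].
      - rewrite Rmult_0_r; unfold Rdiv; rewrite Rinv_0; lra.
      - unfold Rdiv; assert (/ (3 * C) < 0) by (apply Rinv_lt_0_compat; lra); lra. }
    rewrite (sqrt_neg_0 _ Hneg) in HK; destruct HK as [-> | ->]; ring.
  - right; assert (Hpos : 0 <= 2 / (3 * C)).
    { unfold Rdiv; assert (0 < / (3 * C)) by (apply Rinv_0_lt_compat; lra); lra. }
    assert (HK2 : K ^ 2 = 4 * omega g ^ 2 * (2 / (3 * C))).
    { rewrite <- (sqrt_sqrt _ Hpos); destruct HK as [-> | ->]; ring. }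
    rewrite HK2; field; lra.
Qed.

Theorem lemma6p1 (gamma : nat) (K : R)
  (hK : K = 2 * omega gamma * sqrt (2 / (3 * Ccoef gamma gamma gamma gamma))
        \/ K = - (2 * omega gamma * sqrt (2 / (3 * Ccoef gamma gamma gamma gamma)))) :
  forall m : nat, Mop (fun n => if Nat.eqb n gamma then K else 0) m = 0.
Proof.
  intros m; change (Mop (single_mode gamma K) m = 0).
  unfold Mop, Aop; rewrite favg_single_mode; unfold single_mode.
  destruct (Nat.eqb_spec m gamma) as [-> | _]; [|ring].
  destruct (amplitude_cases gamma K hK) as [-> | HK]; [ring|].
  transitivity (K * (omega gamma ^ 2 - 3 / 8 * (Ccoef gamma gamma gamma gamma * K ^ 2)));
    [ring|].
  rewrite HK; field.
Qed.
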